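(* Fix $1\le s\le d$ with $d/s$ an integer, and $T$ such that $T/2$, $Ts/(2d)$ and $T/(2s)$ are integers. Let $(f,O)\in\mathcal{O}_{\mathtt{blsp},s}$, so $f(x)=\|x-v\|_2^2$ for an $s$-block sparse $v$ and $O$ is built from a random $X\in\{-1,1\}^d$ with independent coordinates and $\mathbb{E}[X]=v$. Consider the following adaptive coordinate descent procedure using $T$ oracle queries, each of whose gradient estimates is observed only through one coordinate (i.e. through an oblivious sampling channel that deterministically selects a coordinate, chosen adaptively): Exploration phase (first $T/2$ queries): for each block $k\in[d/s]$, query the oracle $Ts/(2d)$ times and observe coordinate $(k-1)s+1$ of the gradient estimate, recovering from it the value $X_t((k-1)s+1)$ (possible since the query point is known); set $\hat X(k)$ to be the sum of these $Ts/(2d)$ recovered values. Let $k^*=\arg\max_{k\in[d/s]}|\hat X(k)|$ and $\mathcal{I}=\{(k^*-1)s+1,\dots,k^*s\}$. Exploitation phase (last $T/2$ queries): for each $j\in\mathcal{I}$, query the oracle $T/(2s)$ fresh times observing coordinate $j$, recover the values $X_t(j)$, and set $\hat Y(j)=\frac{2s}{T}\sum X_t(j)$ over these queries; set $\hat Y(j)=0$ for $j\notin\mathcal{I}$. Then the output $\hat Y=(\hat Y(1),\dots,\hat Y(d))$ satisfies \[ \mathbb{E}[f(\hat Y)]\ \le\ \frac{36\,d\ln\frac ds+2s^2}{T}. \]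
   Context: Partition $[d]$ into blocks $\{(k-1)s+1,\dots,ks\}$, $k\in[d/s]$. A vector $v\in\mathbb{R}^d$ is $s$-block sparse if it vanishes outside a single block and all coordinates in that block have the same absolute value, lying in $[0,1]$. $\mathcal{O}_{\mathtt{blsp},s}$ is the set of pairs $(f_v,O_v)$, $v$ $s$-block sparse, where $f_v(x)=\|x-v\|_2^2$ on $\mathcal{X}=[-1,1]^d$ and $O_v$, on query $x$ at time $t$, outputs $2(x-X_t)$, where $X_1,X_2,\dots$ are i.i.d. copies of a random vector $X\in\{-1,1\}^d$ with independent coordinates and $\mathbb{E}[X]=v$. *)

From HB Require Import structures.
From mathcomp Require Import all_boot all_order all_algebra.
From mathcomp Require Import reals exp.
Set Implicit Arguments. Unset Strict Implicit. Unset Printing Implicit Defensive.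
Import Order.TTheory GRing.Theory Num.Theory.
Local Open Scope ring_scope.

(* Dimension d = s * m, blocks are indexed by k : 'I_m (0-based); coordinate
   i : 'I_(s*m) lies in block i %/ s.  *)

Definition block_sparse {R : realType} (s m : nat) (v : 'I_(s * m) -> R) : Prop :=
  exists (k : 'I_m) (a : R), 0 <= a /\ a <= 1 /\
    forall i : 'I_(s * m),
      ((i %/ s)%N != k -> v i = 0) /\ ((i %/ s)%N == k -> `|v i| = a).

Definition fv {R : realType} (d : nat) (v : 'I_d -> R) (x : 'I_d -> R) : R :=
  \sum_(i < d) (x i - v i) ^+ 2.

(* Sample space of the T i.i.d. oracle samples X_1..X_T in {-1,1}^d,
   encoded as booleans (true <-> +1). *)
Definition Omega (T d : nat) := {ffun 'I_T -> {ffun 'I_d -> bool}}.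

(* Probability of an outcome: coordinates independent, sample t independent,
   P(X(i) = 1) = (1 + v i)/2, P(X(i) = -1) = (1 - v i)/2, so E[X] = v. *)
Definition prob {R : realType} (T d : nat) (v : 'I_d -> R) (w : Omega T d) : R :=
  \prod_(t < T) \prod_(i < d) (if w t i then (1 + v i) / 2 else (1 - v i) / 2).

(* X_t(i) as a real number (0-based t, i); 0 outside range (never used). *)
Definition Xv (R : realType) (T d : nat) (w : Omega T d) (t i : nat) : R :=
  match (insub t : option 'I_T), (insub i : option 'I_d) with
  | Some t', Some i' => if w t' i' then 1 else -1
  | _, _ => 0
  end.

(* Exploration: block k uses samples k*(T/(2m)) .. (k+1)*(T/(2m)) - 1
   (all within the first T/2), observing the first coordinate k*s of block k. *)
Definition Xhat (R : realType) (s m T : nat) (w : Omega T (s * m)) (k : 'I_m) : R :=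
  \sum_(r < T %/ (2 * m)) Xv R w (k * (T %/ (2 * m)) + r)%N (k * s)%N.

(* Exploitation: for j in block kst, use T/(2s) fresh samples (from the last
   T/2) observing coordinate j; Yhat j = (2s/T) * sum; Yhat j = 0 otherwise. *)
Definition Yhat (R : realType) (s m T : nat) (kst : 'I_m) (w : Omega T (s * m))
  (j : 'I_(s * m)) : R :=
  if (j %/ s)%N == kst then
    (2 * s)%:R / T%:R *
      \sum_(u < T %/ (2 * s)) Xv R w (T %/ 2 + (j %% s) * (T %/ (2 * s)) + u)%N j
  else 0.

Arguments block_sparse {R} s m v.
Arguments fv {R} d v x.
Arguments prob {R} T d v w.
Arguments Xhat R s m T w k : clear implicits.
Arguments Yhat R s m T kst w j : clear implicits.

From HB Require Import structures.
From mathcomp Require Import all_boot all_order all_algebra.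
From mathcomp Require Import reals sequences exp.
From mathcomp Require Import zify ring lra.
Import Order.TTheory GRing.Theory Num.Theory.
Local Open Scope ring_scope.

(* The block k^ chosen by exploration depends only on the first T/2 samples and
   the exploitation estimates only on the last T/2, so E f(Y^) splits as
   sum_k P(k^ = k) E f(Y^_k), where Y^_k is the output when block k is chosen.
   Each exploitation average of T/(2s) signs has variance at most 2s/T, whence
   E f(Y^_k) <= 2s^2/T + [k <> k0] s a^2, with k0 the support block of v and a
   the common magnitude of its entries.  It remains to show
   a^2 P(k^ <> k0) <= 18 ln m / n, with n = T/(2m) samples per block: this is
   trivial when n a^2 <= 18 ln m; otherwise Chebyshev's inequality controls the
   true block and Chernoff bounds (using cosh l <= 1 + 7 l^2 / 10) the m - 1
   empty ones. *)

Definition sgnb {R : realType} (b : bool) : R := if b then 1 else -1.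

Definition bern {R : realType} (x : R) (b : bool) : R :=
  if b then (1 + x) / 2 else (1 - x) / 2.

Lemma bern_sum {R : realType} (x : R) : \sum_b bern x b = 1.
Proof. rewrite big_bool /bern /=; lra. Qed.

Lemma bern_ge0 {R : realType} (x : R) b : `|x| <= 1 -> 0 <= bern x b.
Proof. by rewrite ler_norml => /andP[? ?]; case: b; rewrite /bern; lra. Qed.

Lemma bern_center {R : realType} (x : R) : \sum_b bern x b * (sgnb b - x) = 0.
Proof. by rewrite big_bool /bern /sgnb /=; field. Qed.

Lemma bern_var {R : realType} (x : R) :
  \sum_b bern x b * (sgnb b - x) ^+ 2 = 1 - x ^+ 2.
Proof. by rewrite big_bool /bern /sgnb /=; field. Qed.

Lemma sum_indicator {R : realType} {m : nat} (K : 'I_m) (F : 'I_m -> R) :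
  \sum_k (K == k)%:R * F k = F K.
Proof.
rewrite (bigD1 K) //= eqxx mul1r big1 ?addr0 // => k.
by rewrite eq_sym => /negbTE ->; rewrite mul0r.
Qed.

Section RealInequalities.
Context {R : realType}.
Implicit Types l x : R.

Lemma cosh_le l : `|l| <= 2/5 -> (expR l + expR (- l)) / 2 <= 1 + 7/10 * l ^+ 2.
Proof.
wlog l0 : l / 0 <= l => [hwlog|].
  case: (lerP 0 l) => [|l_lt0 hl]; first exact: hwlog.
  rewrite -sqrrN addrC -{2}(opprK l).
  by apply: hwlog; rewrite ?normrN // oppr_ge0 ltW.
rewrite ger0_norm // => l1.
set u := expR (l / 2); set z := expR (- (l / 2)).
have uz1 : u * z = 1 by rewrite -expRD subrr expR0.
have u2 : expR l = u ^+ 2 by rewrite -expRM_natl; congr expR; field.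
have z2 : expR (- l) = z ^+ 2 by rewrite -expRM_natl; congr expR; field.
have z_ge : 1 - l / 2 <= z by exact: expR_ge1Dx.
have z_le1 : z <= 1 by rewrite expR_le1 oppr_le0 divr_ge0.
have u_ge1 : 1 <= u by rewrite -expR0 ler_expR divr_ge0.
have z_gt0 : 0 < z := expR_gt0 _.
have uz_le : u - z <= 59/50 * l.
  rewrite -(ler_pM2r z_gt0) mulrBl uz1; nra.
rewrite u2 z2 (_ : u ^+ 2 + z ^+ 2 = (u - z) ^+ 2 + 2); last by rewrite sqrrB uz1; ring.
have : (u - z) ^+ 2 <= (59/50 * l) ^+ 2 by rewrite lerXn2r // nnegrE; nra.
nra.
Qed.

Lemma expr1D_le_expR x (n : nat) : 0 <= 1 + x -> (1 + x) ^+ n <= expR (n%:R * x).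
Proof. by move=> x1; rewrite expRM_natl lerXn2r ?nnegrE ?expR_ge0 ?expR_ge1Dx. Qed.

Lemma ln2_ge : 3/5 <= ln (2 : R).
Proof.
have e_le : expR (3/20 : R) <= 20/17.
  have := expR_ge1Dx (- (3/20 : R)); rewrite expRN.
  have := expR_gt0 (3/20 : R); set e := expR _ => e0.
  by rewrite -(ler_pM2r e0) mulVf ?gt_eqF // => ?; lra.
rewrite -ler_expR lnK ?posrE // (_ : 3/5 = 4%:R * (3/20)); last by field.
rewrite expRM_natl; apply: le_trans (_ : (20/17) ^+ 4 <= 2); last lra.
by rewrite lerXn2r ?nnegrE ?expR_ge0 //; lra.
Qed.

Lemma xexpR_le (c x0 x : R) : 0 < c -> 1 <= c * x0 -> x0 <= x ->
  x * expR (- (c * x)) <= x0 * expR (- (c * x0)).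
Proof.
move=> c0 cx0 x0x.
have -> : expR (- (c * x0)) = expR (- (c * x)) * expR (c * (x - x0)).
  by rewrite -expRD; congr expR; ring.
have := expR_ge1Dx (c * (x - x0)); have := expR_gt0 (- (c * x)).
set E := expR (- (c * x)); set F := expR (c * (x - x0)) => E0 F_ge.
have x0_gt0 : 0 < x0 by rewrite -(pmulr_rgt0 _ c0); lra.
have x_le : x <= x0 * F.
  apply: le_trans (ler_wpM2l (ltW x0_gt0) F_ge).
  have : 0 <= (c * x0 - 1) * (x - x0) by apply: mulr_ge0; rewrite subr_ge0.
  nra.
nra.
Qed.

Lemma miss_bound_real (m x : R) : 2 <= m -> 18 * ln m < x ->
  625/121 + 2 * (m - 1) * (x * expR (- (14/125 * x))) <= 18 * ln m.
Proof.
move=> m2 hx.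
have lnm : 3/5 <= ln m by apply: le_trans ln2_ge _; rewrite ler_ln ?posrE //; lra.
set L := ln m in hx lnm *.
have m_gt0 : 0 < m by lra.
have invm2 : (m ^+ 2)^-1 = expR (- (2 * L)) by rewrite expRN expRM_natl lnK.
have xe_le : x * expR (- (14/125 * x)) <= 18 * L * (m ^+ 2)^-1.
  apply: le_trans (@xexpR_le (14/125) (18 * L) x _ _ (ltW hx)) _; try lra.
  by rewrite invm2 ler_wpM2l ?ler_expR; lra.
have m1_le : (m - 1) * (m ^+ 2)^-1 <= 1/4.
  by rewrite ler_pdivrMr ?exprn_gt0 //; nra.
have xe_ge0 : 0 <= x * expR (- (14/125 * x)) by rewrite mulr_ge0 ?expR_ge0 //; lra.
have : (m - 1) * (x * expR (- (14/125 * x))) <= (m - 1) * (18 * L * (m ^+ 2)^-1).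
  by rewrite ler_wpM2l //; lra.
nra.
Qed.

End RealInequalities.

Section ProductSpace.
Context {R : realType} {T d : nat} (v : 'I_d -> R).

Definition expect (F : Omega T d -> R) : R := \sum_w prob T d v w * F w.

Definition depends_on {X : Type} (A : pred 'I_T) (F : Omega T d -> X) :=
  forall w w' : Omega T d, (forall t, A t -> w t = w' t) -> F w = F w'.

Lemma eq_expect {F G : Omega T d -> R} : F =1 G -> expect F = expect G.
Proof. by move=> FG; apply: eq_bigr => w _; rewrite FG. Qed.

Lemma expectD (F G : Omega T d -> R) :
  expect (fun w => F w + G w) = expect F + expect G.
Proof. by rewrite /expect -big_split; apply: eq_bigr => w _; rewrite mulrDr. Qed.

Lemma expectZ (c : R) (F : Omega T d -> R) :
  expect (fun w => c * F w) = c * expect F.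
Proof. by rewrite /expect mulr_sumr; apply: eq_bigr => w _; rewrite mulrCA. Qed.

Lemma expect_sum (I : finType) (P : pred I) (F : I -> Omega T d -> R) :
  expect (fun w => \sum_(i | P i) F i w) = \sum_(i | P i) expect (F i).
Proof. by rewrite /expect exchange_big; apply: eq_bigr => w _; rewrite mulr_sumr. Qed.

Lemma expect_prod (g : 'I_T -> 'I_d -> bool -> R) :
  expect (fun w => \prod_t \prod_i g t i (w t i)) =
  \prod_t \prod_i \sum_b bern (v i) b * g t i b.
Proof.
transitivity (\sum_(w : Omega T d) \prod_t \prod_i (bern (v i) (w t i) * g t i (w t i))).
  by apply: eq_bigr => w _; rewrite -big_split; apply: eq_bigr => t _; rewrite -big_split.
rewrite -(bigA_distr_bigA (fun t (x : {ffun 'I_d -> bool}) =>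
  \prod_i (bern (v i) (x i) * g t i (x i)))).
by apply: eq_bigr => t _; rewrite bigA_distr_bigA.
Qed.

Lemma expect_cst (c : R) : expect (fun _ => c) = c.
Proof.
have total : expect (fun _ => 1) = 1.
  transitivity (\prod_(t < T) \prod_(i < d) \sum_b bern (v i) b * 1).
    by rewrite -(expect_prod (fun _ _ _ => 1)); apply: eq_expect => w; rewrite !big1.
  apply: big1 => t _; apply: big1 => i _.
  by under eq_bigr do rewrite mulr1; exact: bern_sum.
by rewrite -[c]mulr1 expectZ total.
Qed.

Lemma expect_prod_coord (P : pred 'I_T) (i : 'I_d) (h : bool -> R) :
  expect (fun w => \prod_(t | P t) h (w t i)) =
  (\sum_b bern (v i) b * h b) ^+ #|P|.
Proof.
pose g t j b := if P t && (j == i) then h b else 1.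
have gE (w : Omega T d) : \prod_(t | P t) h (w t i) = \prod_t \prod_j g t j (w t j).
  rewrite big_mkcond; apply: eq_bigr => t _; rewrite (bigD1 i) //= [X in _ * X]big1 /g.
    by rewrite eqxx andbT mulr1; case: (P t).
  by move=> j /negbTE ->; rewrite andbF.
rewrite (eq_expect gE) expect_prod -prodr_const [RHS]big_mkcond.
apply: eq_bigr => t _; rewrite -[t \in P]/(P t) (bigD1 i) //= [X in _ * X]big1 /g.
  by rewrite eqxx andbT; case: (P t); rewrite mulr1 //; under eq_bigr do rewrite mulr1;
    rewrite bern_sum.
by move=> j /negbTE ->; rewrite andbF; under eq_bigr do rewrite mulr1; rewrite bern_sum.
Qed.

Lemma expect_coord (t : 'I_T) (i : 'I_d) (h : bool -> R) :
  expect (fun w => h (w t i)) = \sum_b bern (v i) b * h b.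
Proof.
rewrite -[RHS]expr1 -(card1 t) -expect_prod_coord.
by apply: eq_expect => w; rewrite big_pred1_eq.
Qed.

Lemma expect_indep {A : pred 'I_T} {F G : Omega T d -> R} :
  depends_on A F -> depends_on (predC A) G ->
  expect (fun w => F w * G w) = expect F * expect G.
Proof.
move=> dF dG; rewrite -[LHS]mulr1 -(expect_cst 1) /expect !mulr_suml.
under eq_bigr do rewrite mulr_sumr; under [RHS]eq_bigr do rewrite mulr_sumr.
rewrite !pair_bigA /=.
(* Exchanging the samples outside A between two independent copies of the
   sample preserves the product measure. *)
pose mix A (w w' : Omega T d) : Omega T d := [ffun t => if A t then w t else w' t].
pose swap (p : Omega T d * Omega T d) := (mix A p.1 p.2, mix A p.2 p.1).
have swapK : involutive swap.
  by case=> w w'; congr pair; apply/ffunP => t; rewrite !ffunE; case: (A t).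
rewrite (reindex_inj (inv_inj swapK)); apply: eq_bigr => -[w w'] _ /=.
have probM : prob T d v (mix A w w') * prob T d v (mix A w' w) =
             prob T d v w * prob T d v w'.
  rewrite /prob -!big_split; apply: eq_bigr => t _.
  by rewrite !ffunE; case: (A t); last exact: mulrC.
have -> : F (mix A w w') = F w by apply: dF => t At; rewrite ffunE At.
have -> : G (mix A w w') = G w' by apply: dG => t /negbTE At; rewrite ffunE At.
by rewrite mulr1 mulrAC probM mulrACA.
Qed.

Lemma expect_sum_sq (P : pred 'I_T) (i : 'I_d) :
  expect (fun w => (\sum_(t | P t) (sgnb (w t i) - v i)) ^+ 2) =
  #|P|%:R * (1 - v i ^+ 2).
Proof.
pose X (w : Omega T d) t := sgnb (w t i) - v i.
have sqE w : (\sum_(t | P t) X w t) ^+ 2 = \sum_(t | P t) \sum_(t' | P t') X w t * X w t'.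
  by rewrite expr2 mulr_suml; apply: eq_bigr => t _; rewrite mulr_sumr.
rewrite (eq_expect sqE) expect_sum -sum1_card natr_sum mulr_suml.
apply: eq_bigr => t Pt; rewrite expect_sum (bigD1 t) //= big1 ?addr0.
  rewrite mul1r -bern_var -(expect_coord t i (fun b => (sgnb b - v i) ^+ 2)).
  by apply: eq_expect => w; rewrite expr2.
move=> t' /andP[_ t't].
rewrite (@expect_indep (pred1 t) (X^~ t) (X^~ t')).
  by rewrite (expect_coord t i (fun b => sgnb b - v i)) bern_center mul0r.
  by move=> w w' ww'; rewrite /X (ww' t) /= ?eqxx.
by move=> w w' ww'; rewrite /X (ww' t') /= ?t't.
Qed.

Lemma expect_expR_sum_le (P : pred 'I_T) (i : 'I_d) (l : R) :
  v i = 0 -> `|l| <= 2/5 ->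
  expect (fun w => expR (l * \sum_(t | P t) sgnb (w t i))) <=
  expR (#|P|%:R * (7/10 * l ^+ 2)).
Proof.
move=> vi0 hl.
rewrite (eq_expect (G := fun w => \prod_(t | P t) expR (l * sgnb (w t i)))); last first.
  by move=> w; rewrite mulr_sumr expR_sum.
rewrite (expect_prod_coord P i (fun b => expR (l * sgnb b))).
have -> : \sum_b bern (v i) b * expR (l * sgnb b) = (expR l + expR (- l)) / 2.
  by rewrite big_bool /bern /sgnb vi0 /= addr0 subr0 mulr1 mulrN1; field.
apply: le_trans _ (expr1D_le_expR (7/10 * l ^+ 2) #|P| _); last by have := sqr_ge0 l; lra.
rewrite lerXn2r ?nnegrE ?cosh_le //.
  by rewrite divr_ge0 ?addr_ge0 ?expR_ge0.
by have := sqr_ge0 l; lra.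
Qed.

Hypothesis v_le1 : forall i, `|v i| <= 1.

Lemma prob_ge0 w : 0 <= prob T d v w.
Proof. by rewrite /prob; do 2!apply: prodr_ge0 => ? _; exact: bern_ge0. Qed.

Lemma ler_expect {F G : Omega T d -> R} :
  (forall w, F w <= G w) -> expect F <= expect G.
Proof. by move=> FG; apply: ler_sum => w _; rewrite ler_wpM2l ?prob_ge0. Qed.

Lemma expect_select_le {m : nat} (A : pred 'I_T) (K : Omega T d -> 'I_m)
    (F : 'I_m -> Omega T d -> R) (C : 'I_m -> R) :
  depends_on A K -> (forall k, depends_on (predC A) (F k)) ->
  (forall k, expect (F k) <= C k) ->
  expect (fun w => F (K w) w) <= expect (fun w => C (K w)).
Proof.
move=> dK dF FC; have dI k : depends_on A (fun w => (K w == k)%:R : R) by move=> w w' /dK ->.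
rewrite -(eq_expect (fun w => sum_indicator (K w) (F^~ w))) expect_sum.
rewrite -(eq_expect (fun w => sum_indicator (K w) C)) expect_sum.
apply: ler_sum => k _; rewrite (expect_indep (dI k) (dF k)).
rewrite (eq_expect (fun w => mulrC (K w == k)%:R (C k))) expectZ mulrC.
by rewrite ler_wpM2r // -(expect_cst 0) ler_expect.
Qed.

End ProductSpace.

(* Either the true arm deviates from its mean mu by at least B, and then the first
   term is at least 1, or the selected arm exceeds |mu| - B in absolute value,
   and then one of its two exponentials is at least 1. *)
Lemma miss_indicator_le {R : realType} {m : nat} (S : 'I_m -> R) (k0 kst : 'I_m) (mu B l : R) :
  0 <= l -> 0 < B -> `|S k0| <= `|S kst| ->
  (kst != k0)%:R <= (S k0 - mu) ^+ 2 / B ^+ 2 +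
    \sum_(k | k != k0) (expR (l * S k - l * (`|mu| - B)) +
                        expR (- l * S k - l * (`|mu| - B))).
Proof.
move=> l_ge0 B_gt0 S_le.
pose E k := expR (l * S k - l * (`|mu| - B)) + expR (- l * S k - l * (`|mu| - B)).
change ((kst != k0)%:R <= (S k0 - mu) ^+ 2 / B ^+ 2 + \sum_(k | k != k0) E k).
have E_ge0 k : 0 <= E k by rewrite addr_ge0 ?expR_ge0.
have dev_ge0 : 0 <= (S k0 - mu) ^+ 2 / B ^+ 2 by rewrite divr_ge0 ?sqr_ge0.
have [_ | kst_k0] := eqVneq kst k0; first by rewrite /= addr_ge0 ?sumr_ge0.
rewrite (bigD1 kst) //=.
have : 0 <= \sum_(k | (k != k0) && (k != kst)) E k by rewrite sumr_ge0.
have [B_le | dev_lt] := lerP B `|S k0 - mu|.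
  have : 1 <= (S k0 - mu) ^+ 2 / B ^+ 2.
    rewrite ler_pdivlMr ?exprn_gt0 // mul1r -[(S k0 - mu) ^+ 2]real_normK ?num_real //.
    by rewrite lerXn2r ?nnegrE ?normr_ge0 ?(ltW B_gt0).
  by have := E_ge0 kst; lra.
have far : `|mu| - B < `|S kst|.
  apply: lt_le_trans S_le; have := lerB_dist mu (mu - S k0).
  by rewrite (_ : mu - (mu - S k0) = S k0) 1?distrC; [lra | ring].
suff : 1 <= E kst by lra.
rewrite /E; set th := `|mu| - B in far *.
have e1 := expR_ge0 (l * S kst - l * th); have e2 := expR_ge0 (- l * S kst - l * th).
have [S_le0 | S_gt0] := ler0P (S kst).
  rewrite ler0_norm // in far.
  have : 1 <= expR (- l * S kst - l * th) by rewrite -expR0 ler_expR; nra.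
  lra.
rewrite gtr0_norm // in far.
have : 1 <= expR (l * S kst - l * th) by rewrite -expR0 ler_expR; nra.
lra.
Qed.

Section ArgmaxMiss.
Context {R : realType} {T d m : nat} (v : 'I_d -> R).
Variables (P : 'I_m -> pred 'I_T) (c : 'I_m -> 'I_d) (n : nat) (k0 : 'I_m) (a : R).
Variable sel : ('I_m -> R) -> 'I_m.
Hypotheses (v_le1 : forall i, `|v i| <= 1) (card_P : forall k, #|P k| = n).
Hypotheses (v_off : forall k, k != k0 -> v (c k) = 0) (v_on : `|v (c k0)| = a).
Hypothesis sel_max : forall (h : 'I_m -> R) k, `|h k| <= `|h (sel h)|.

Let arm (w : Omega T d) (k : 'I_m) : R := \sum_(t | P k t) sgnb (w t (c k)).

Lemma expect_miss_le (l B : R) : 0 <= l <= 2/5 -> 0 < B ->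
  expect v (fun w => (sel (arm w) != k0)%:R) <=
  n%:R / B ^+ 2 + m.-1%:R * (2 * expR (- (l * (n%:R * a - B)) + n%:R * (7/10 * l ^+ 2))).
Proof.
move=> /andP[l_ge0 l_le] B_gt0; set th := n%:R * a - B.
have mu_norm : `|n%:R * v (c k0)| = n%:R * a by rewrite normrM normr_nat v_on.
apply: le_trans (ler_expect v v_le1 (fun w =>
  miss_indicator_le _ _ _ (n%:R * v (c k0)) _ _ l_ge0 B_gt0 (sel_max (arm w) k0))) _.
rewrite mu_norm -/th expectD expect_sum; apply: lerD.
  rewrite (eq_expect v (G := fun w =>
    (B ^+ 2)^-1 * (\sum_(t | P k0 t) (sgnb (w t (c k0)) - v (c k0))) ^+ 2)); last first.
    by move=> w; rewrite sumrB sumr_const card_P mulr_natl mulrC.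
  rewrite expectZ expect_sum_sq card_P mulrC ler_wpM2r ?invr_ge0 ?sqr_ge0 //.
  by rewrite ler_piMr ?ler0n // gerBl sqr_ge0.
pose bound := expR (- (l * th) + n%:R * (7/10 * l ^+ 2)).
apply: le_trans (_ : \sum_(k | k != k0) 2 * bound <= _); last first.
  by rewrite sumr_const cardC1 card_ord [X in _ <= X]mulr_natl.
apply: ler_sum => k k_k0.
have mgf e : `|e| = l -> expect v (fun w => expR (e * arm w k - l * th)) <= bound.
  move=> e_l; rewrite (eq_expect v (G := fun w => expR (- (l * th)) * expR (e * arm w k))).
    rewrite expectZ /bound expRD ler_wpM2l ?expR_ge0 // -(card_P k) -e_l real_normK ?num_real //.
    by apply: expect_expR_sum_le; rewrite ?v_off ?e_l.
  by move=> w; rewrite -expRD addrC.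
have := mgf l (ger0_norm l_ge0); have := mgf (- l); rewrite normrN ger0_norm //.
by rewrite expectD; lra.
Qed.

Lemma expect_miss_large : (0 < n)%N -> (2 <= m)%N ->
  18 * ln (m%:R : R) < n%:R * a ^+ 2 ->
  n%:R * a ^+ 2 * expect v (fun w => (sel (arm w) != k0)%:R) <= 18 * ln (m%:R : R).
Proof.
move=> n_gt0 m_ge2; set x := n%:R * a ^+ 2 => x_gt.
have n_gt0R : 0 < n%:R :> R by rewrite ltr0n.
have a_ge0 : 0 <= a by rewrite -v_on.
have a_le1 : a <= 1 by rewrite -v_on.
have a_gt0 : 0 < a.
  rewrite lt0r a_ge0 andbT; apply: contraTneq x_gt; rewrite /x => ->.
  by rewrite expr0n mulr0 -leNgt mulr_ge0 // ln_ge0 // ler1n ltnW.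
have x_ge0 : 0 <= x by rewrite mulr_ge0 ?sqr_ge0 ?ltW.
(* With l = 2a/5 and B = 11na/25 the bound of expect_miss_le becomes
   (625/121 + 2 (m - 1) x exp(-14x/125)) / x. *)
have expE : - (2/5 * a * (n%:R * a - 11/25 * (n%:R * a))) + n%:R * (7/10 * (2/5 * a) ^+ 2) =
            - (14/125 * x) by rewrite /x; field.
have xB : x * (n%:R / (11/25 * (n%:R * a)) ^+ 2) = 625/121.
  by rewrite /x; field; rewrite ?gt_eqF.
have m1E : m.-1%:R = m%:R - 1 :> R by rewrite -subn1 natrB // ltnW.
have l_ok : 0 <= 2/5 * a <= 2/5 by apply/andP; split; lra.
have B_gt0 : 0 < 11/25 * (n%:R * a) by apply: mulr_gt0; [lra | exact: mulr_gt0].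
have := ler_wpM2l x_ge0 (expect_miss_le _ _ l_ok B_gt0); rewrite expE m1E mulrDr xB.
rewrite (_ : x * ((m%:R - 1) * _) = 2 * (m%:R - 1) * (x * expR (- (14/125 * x)))); last by ring.
by move/le_trans; apply; apply: miss_bound_real; rewrite // (ler_nat R 2).
Qed.

Lemma expect_miss_bound : (0 < n)%N ->
  a ^+ 2 * expect v (fun w => (sel (arm w) != k0)%:R) <= 18 * ln (m%:R : R) / n%:R.
Proof.
move=> n_gt0; set pw := expect v _.
have pw_le1 : pw <= 1 by rewrite -(expect_cst (T := T) v 1) ler_expect // => w; case: (_ != _).
have n_gt0R : 0 < n%:R :> R by rewrite ltr0n.
have ln_ge0 : 0 <= ln (m%:R : R) by rewrite ln_ge0 // ler1n; case: (m) k0 => [[]|].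
have [m_le1 | m_ge2] := leqP m 1.
  suff -> : pw = 0 by rewrite mulr0 divr_ge0 ?mulr_ge0.
  rewrite -(expect_cst (T := T) v 0); apply: eq_expect => w.
  suff -> : sel (arm w) = k0 by rewrite eqxx.
  by apply: ord_inj; move: (ltn_ord k0) (ltn_ord (sel (arm w))); lia.
rewrite ler_pdivlMr // (mulrC _ n%:R) mulrA.
have [x_le | x_gt] := lerP (n%:R * a ^+ 2) (18 * ln (m%:R : R)); last exact: expect_miss_large.
by apply: le_trans x_le; rewrite ler_piMr // mulr_ge0 ?sqr_ge0 ?ltW.
Qed.

End ArgmaxMiss.

Lemma big_ord_window {A : Type} {idx : A} (op : Monoid.law idx) (T a n : nat) (F : nat -> A) :
  (a + n <= T)%N ->
  \big[op/idx]_(r < n) F (a + r)%N = \big[op/idx]_(t < T | (a <= t < a + n)%N) F t.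
Proof.
move=> le_T; rewrite -(big_ord_widen_cond _ (fun t => a <= t)%N F le_T) -(big_geq_mkord _ _ xpredT).
rewrite (big_addn 0 (a + n) a) addKn big_mkord.
by apply: eq_bigr => r _; rewrite addnC.
Qed.

Lemma card_window (T a n : nat) : (a + n <= T)%N ->
  #|[pred t : 'I_T | (a <= t < a + n)%N]| = n.
Proof.
move=> le_T; have := big_ord_window addn _ _ _ (fun=> 1%N) le_T.
by rewrite sum1_card card_ord sum1_card => E; rewrite [RHS]E; apply: eq_card.
Qed.

Section Estimators.
Context {R : realType} {s m T : nat}.
Hypotheses (s_gt0 : (0 < s)%N) (T_gt0 : (0 < T)%N).
Hypotheses (dvd2m : (2 * m %| T)%N) (dvd2s : (2 * s %| T)%N).

Local Notation n := (T %/ (2 * m))%N.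
Local Notation n' := (T %/ (2 * s))%N.

Lemma half_explore : (T %/ 2 = n * m)%N.
Proof. by rewrite -{1}(divnK dvd2m) mulnCA mulKn. Qed.

Lemma half_exploit : (T %/ 2 = n' * s)%N.
Proof. by rewrite -{1}(divnK dvd2s) mulnCA mulKn. Qed.

Lemma block_head_subproof (k : 'I_m) : (k * s < s * m)%N.
Proof. by rewrite mulnC ltn_pmul2l. Qed.

Definition block_head (k : 'I_m) : 'I_(s * m) := Ordinal (block_head_subproof k).

Lemma block_head_div (k : 'I_m) : (block_head k %/ s = k)%N.
Proof. exact: mulnK. Qed.

Definition explore (k : 'I_m) : pred 'I_T := [pred t : 'I_T | k * n <= t < k * n + n]%N.

Definition exploit (j : 'I_(s * m)) : pred 'I_T :=
  [pred t : 'I_T | T %/ 2 + j %% s * n' <= t < T %/ 2 + j %% s * n' + n']%N.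

Lemma explore_le_half (k : 'I_m) : (k * n + n <= T %/ 2)%N.
Proof. by rewrite addnC -mulSn half_explore [(n * m)%N]mulnC leq_mul2r ltn_ord orbT. Qed.

Lemma exploit_le (j : 'I_(s * m)) : (T %/ 2 + j %% s * n' + n' <= T)%N.
Proof.
have blk : ((j %% s).+1 * n' <= T %/ 2)%N.
  by rewrite half_exploit [X in (X <= _)%N]mulnC leq_mul2l ltn_pmod ?orbT.
rewrite -addnA [(_ + n')%N]addnC -mulSn (leq_trans (leq_add (leqnn _) blk)) //.
by rewrite divn2 addnn halfK leq_subr.
Qed.

Lemma card_explore (k : 'I_m) : #|explore k| = n.
Proof. exact/card_window/(leq_trans (explore_le_half k))/leq_div. Qed.

Lemma Xv_ord (w : Omega T (s * m)) (t : 'I_T) (i : 'I_(s * m)) : Xv R w t i = sgnb (w t i).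
Proof. by rewrite /Xv !valK. Qed.

Lemma XhatE (w : Omega T (s * m)) :
  Xhat R s m T w = fun k => \sum_(t | explore k t) sgnb (w t (block_head k)).
Proof.
apply: boolp.funext => k; rewrite /Xhat (big_ord_window _ T _ _ (fun t => Xv R w t (k * s))).
  by apply: eq_bigr => t _; rewrite -[(k * s)%N]/(val (block_head k)) Xv_ord.
exact: leq_trans (explore_le_half k) (leq_div T 2).
Qed.

Lemma Yhat_window (k : 'I_m) (w : Omega T (s * m)) (j : 'I_(s * m)) :
  Yhat R s m T k w j =
  if (j %/ s == k)%N then (2 * s)%N%:R / T%:R * \sum_(t | exploit j t) sgnb (w t j) else 0.
Proof.
rewrite /Yhat (big_ord_window _ T _ _ (fun t => Xv R w t j)); last exact: exploit_le.
by under eq_bigr do rewrite Xv_ord.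
Qed.

Definition first_half : pred 'I_T := [pred t : 'I_T | t < T %/ 2]%N.

Lemma Xhat_depends : depends_on first_half (Xhat R s m T).
Proof.
move=> w w' ww'; rewrite !XhatE; apply: boolp.funext => k.
apply: eq_bigr => t /andP[_ t_lt]; rewrite ww' //.
exact: leq_trans t_lt (explore_le_half k).
Qed.

Lemma fv_Yhat_depends (v : 'I_(s * m) -> R) (k : 'I_m) :
  depends_on (predC first_half) (fun w => fv (s * m) v (Yhat R s m T k w)).
Proof.
move=> w w' ww'; apply: eq_bigr => j _; rewrite !Yhat_window.
case: ifP => // _; congr ((_ * _ - _) ^+ 2); apply: eq_bigr => t /andP[t_ge _].
by rewrite ww' //= -leqNgt (leq_trans (leq_addr _ _) t_ge).
Qed.

Lemma card_block (k : 'I_m) : #|[pred j : 'I_(s * m) | j %/ s == k]%N| = s.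
Proof.
rewrite -[RHS](@card_window (s * m) (k * s) s); last first.
  by rewrite addnC -mulSn mulnC leq_mul2l ltn_ord orbT.
apply: eq_card => j; rewrite !inE eqn_leq leq_divRL // -ltnS ltn_divLR // mulSn.
by rewrite andbC addnC.
Qed.

Lemma exploit_scale : (2 * s)%N%:R / T%:R * n'%:R = 1 :> R.
Proof.
have n'_gt0 : (0 < n')%N by rewrite divn_gt0 ?muln_gt0 // dvdn_leq.
rewrite -{1}(divnK dvd2s) natrM; field.
by rewrite !pnatr_eq0 -!lt0n s_gt0 n'_gt0.
Qed.

Variables (v : 'I_(s * m) -> R) (k0 : 'I_m) (a : R).
Hypothesis v_off : forall i : 'I_(s * m), (i %/ s != k0)%N -> v i = 0.
Hypothesis v_on : forall i : 'I_(s * m), (i %/ s == k0)%N -> `|v i| = a.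

Lemma expect_sq_exploit (j : 'I_(s * m)) :
  expect v (fun w => ((2 * s)%N%:R / T%:R * \sum_(t | exploit j t) sgnb (w t j) - v j) ^+ 2) =
  (2 * s)%N%:R / T%:R * (1 - v j ^+ 2).
Proof.
have card_exploit : #|exploit j| = n' by apply: card_window; exact: exploit_le.
rewrite (eq_expect v (G := fun w => ((2 * s)%N%:R / T%:R) ^+ 2 *
                      (\sum_(t | exploit j t) (sgnb (w t j) - v j)) ^+ 2)).
  by rewrite expectZ expect_sum_sq card_exploit mulrA expr2 -(mulrA _ _ n'%:R) exploit_scale mulr1.
move=> w; rewrite sumrB sumr_const card_exploit -(mulr_natl (v j)) -exprMn mulrBr mulrA.
by rewrite exploit_scale mul1r.
Qed.

Lemma expect_fv_Yhat (k : 'I_m) :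
  expect v (fun w => fv (s * m) v (Yhat R s m T k w)) <=
  2 * s%:R ^+ 2 / T%:R + (k != k0)%:R * (s%:R * a ^+ 2).
Proof.
pose c : R := (2 * s)%N%:R / T%:R.
have c_ge0 : 0 <= c by rewrite divr_ge0.
pose block k' := [pred j : 'I_(s * m) | j %/ s == k']%N.
apply: le_trans (_ : \sum_j ((if block k j then c else 0) +
    (if block k0 j then (k != k0)%:R * a ^+ 2 else 0)) <= _).
  rewrite /fv expect_sum; apply: ler_sum => j _.
  have miss_ge0 : 0 <= if block k0 j then (k != k0)%:R * a ^+ 2 else 0.
    by case: ifP; rewrite // mulr_ge0 ?sqr_ge0.
  under eq_expect => w do rewrite Yhat_window; rewrite /block /=.
  case: ifP => jk.
    by rewrite expect_sq_exploit -/c ler_wpDr // ler_piMr // gerBl sqr_ge0.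
  rewrite sub0r expect_cst add0r; case: ifP => jk0; last by rewrite sqrrN v_off ?jk0 // expr0n.
  have -> : k != k0 by apply: contraFneq jk => ->.
  by rewrite sqrrN mul1r -(v_on _ jk0) real_normK ?num_real.
rewrite big_split /= -!big_mkcond !sumr_const !card_block.
rewrite -[c *+ s]mulr_natr -[(_ * a ^+ 2) *+ s]mulr_natr.
have -> : c * s%:R = 2 * s%:R ^+ 2 / T%:R by rewrite /c natrM; ring.
by rewrite -[_ * a ^+ 2 * _]mulrA (mulrC (a ^+ 2)).
Qed.

Hypothesis v_le1 : forall i, `|v i| <= 1.
Variable sel : ('I_m -> R) -> 'I_m.
Hypothesis sel_max : forall (h : 'I_m -> R) k, `|h k| <= `|h (sel h)|.

Lemma expect_wrong_block :
  a ^+ 2 * expect v (fun w => (sel (Xhat R s m T w) != k0)%:R) <= 18 * ln (m%:R : R) / n%:R.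
Proof.
have m_gt0 : (0 < m)%N by case: (m) k0 => [[]|].
have n_gt0 : (0 < n)%N by rewrite divn_gt0 ?muln_gt0 // dvdn_leq.
under eq_expect do rewrite XhatE.
apply: (expect_miss_bound v explore block_head) => //; first exact: card_explore.
  by move=> k k_k0; apply: v_off; rewrite block_head_div.
by apply: v_on; rewrite block_head_div.
Qed.

End Estimators.

Theorem theorem13 (R : realType) (s m T : nat) (v : 'I_(s * m) -> R)
    (sel : ('I_m -> R) -> 'I_m) :
  (0 < s)%N -> (0 < m)%N -> (0 < T)%N ->
  (2 %| T)%N -> (2 * m %| T)%N -> (2 * s %| T)%N ->
  block_sparse s m v ->
  (forall (h : 'I_m -> R) (k : 'I_m), `|h k| <= `|h (sel h)|) ->
  \sum_(w : Omega T (s * m))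
     prob T (s * m) v w *
       fv (s * m) v (Yhat R s m T (sel (Xhat R s m T w)) w)
  <= (36 * (s * m)%:R * ln (m%:R : R) + 2 * (s%:R) ^+ 2) / T%:R.
Proof.
move=> s_gt0 m_gt0 T_gt0 _ dvd2m dvd2s [k0 [a [a_ge0 [a_le1 v_blk]]]] sel_max.
have v_off (i : 'I_(s * m)) : (i %/ s)%N != k0 -> v i = 0 := (v_blk i).1.
have v_on (i : 'I_(s * m)) : (i %/ s)%N == k0 -> `|v i| = a := (v_blk i).2.
have v_le1 (i : 'I_(s * m)) : `|v i| <= 1.
  by case: (boolP ((i %/ s)%N == k0)) => [/v_on -> | /v_off ->]; rewrite ?normr0.
pose C0 : R := 2 * s%:R ^+ 2 / T%:R.
have dK : depends_on first_half (fun w => sel (Xhat R s m T w)).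
  by move=> w w' /(Xhat_depends s_gt0 dvd2m) ->.
apply: le_trans (expect_select_le v v_le1 _ _ _ (fun k => C0 + (k != k0)%:R * (s%:R * a ^+ 2))
  dK (fv_Yhat_depends s_gt0 dvd2s v) (expect_fv_Yhat s_gt0 T_gt0 dvd2s _ _ _ v_off v_on)) _.
rewrite expectD expect_cst (eq_expect v (fun w => mulrC _ _)) expectZ -mulrA.
set n := (T %/ (2 * m))%N.
rewrite [X in _ <= X](_ : _ = C0 + s%:R * (18 * ln (m%:R : R) / n%:R)).
  rewrite lerD2l ler_wpM2l //.
  exact: (expect_wrong_block s_gt0 T_gt0 dvd2m _ _ _ v_off v_on v_le1 _ sel_max).
have n_gt0 : (0 < n)%N by rewrite divn_gt0 ?muln_gt0 // dvdn_leq.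
have T_eq : T%:R = n%:R * (2 * m)%:R :> R by rewrite -natrM divnK.
by rewrite /C0 T_eq !natrM; field; rewrite !pnatr_eq0 -!lt0n n_gt0.
Qed.
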